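(* Let $\mathcal{G}$ be a strongly connected directed graph on $[N]$ containing all self-loops, and let $\epsilon,C_1,C_2>0$. Let $\{M^{(t)}\}_{t\ge0}=\{D^{(t)}A^{(t)}\}_{t\ge0}$ be a sequence in $\mathcal{M}_{\mathcal{G},\epsilon,C_1,C_2}$ and let $P^{(t)}=M^{(t)}M^{(t-1)}\cdots M^{(0)}$. Then the sequence of partial products $\{P^{(t)}\}_{t\ge0}$ is ergodic: there exists a sequence of entrywise positive rank one matrices $\{S^{(t)}\}_{t\ge0}$ such that $\lim_{t\to\infty}P^{(t)}_{ij}/S^{(t)}_{ij}=1$ for all $i,j\in[N]$.
   Context: $\mathcal{A}_{\mathcal{G},\epsilon}$ is the set of $N\times N$ row-stochastic matrices $A$ with $\epsilon\le A_{ij}\le1$ if $(j,i)\in E(\mathcal{G})$ and $A_{ij}=0$ if $(j,i)\notin E(\mathcal{G})$. $\mathcal{D}_{C_1,C_2}$ is the set of diagonal matrices $\mathrm{diag}(\mathbf{d})$ with $C_1\le\mathbf{d}_i\le C_2$ for all $i$. $\mathcal{M}_{\mathcal{G},\epsilon,C_1,C_2}=\{DA: D\in\mathcal{D}_{C_1,C_2},\ A\in\mathcal{A}_{\mathcal{G},\epsilon}\}$. Strongly connected: any two distinct nodes are mutually reachable by directed paths. *)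

From HB Require Import structures.
From mathcomp Require Import all_boot all_order all_algebra.
From mathcomp Require Import all_classical all_reals all_analysis.
Set Implicit Arguments. Unset Strict Implicit. Unset Printing Implicit Defensive.
Import Order.TTheory GRing.Theory Num.Theory.
Local Open Scope ring_scope.

(* A directed graph on [N] = 'I_N is an edge relation E : rel 'I_N,
   where E j i means the directed edge (j,i) (from j to i) is in E(G). *)

Definition has_self_loops (N : nat) (E : rel 'I_N) : Prop := forall i, E i i.

Definition strongly_connected (N : nat) (E : rel 'I_N) : Prop :=
  forall i j : 'I_N, i != j -> connect E i j /\ connect E j i.

Definition row_stochastic (R : realType) (N : nat) (A : 'M[R]_N) : Prop :=
  (forall i j, 0 <= A i j) /\ (forall i, \sum_j A i j = 1).

Definition in_A (R : realType) (N : nat) (E : rel 'I_N) (eps : R) (A : 'M[R]_N) : Prop :=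
  row_stochastic A /\
  (forall i j, E j i -> eps <= A i j /\ A i j <= 1) /\
  (forall i j, ~~ E j i -> A i j = 0).

Definition in_D (R : realType) (N : nat) (C1 C2 : R) (D : 'M[R]_N) : Prop :=
  exists d : 'rV[R]_N, D = diag_mx d /\ forall i, C1 <= d 0 i <= C2.

Definition in_M (R : realType) (N : nat) (E : rel 'I_N) (eps C1 C2 : R)
  (M : 'M[R]_N) : Prop :=
  exists D A, in_D C1 C2 D /\ in_A E eps A /\ M = D *m A.

Fixpoint partial_prod (R : realType) (N : nat) (M : nat -> 'M[R]_N) (t : nat)
  : 'M[R]_N :=
  match t with
  | 0 => M 0%N
  | t'.+1 => M t'.+1 *m partial_prod M t'
  end.

From HB Require Import structures.
From mathcomp Require Import all_boot all_order all_algebra.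
From mathcomp Require Import all_classical all_reals all_analysis.
From mathcomp Require Import ring lra.
Import Order.TTheory GRing.Theory Num.Theory.
Import numFieldNormedType.Exports.
Local Open Scope classical_set_scope.
Local Open Scope ring_scope.
Set Implicit Arguments. Unset Strict Implicit.

(* Fix a reference column o. For each column j, the ratios P_t(k,j) / P_t(k,o)
   over the rows k lie in a window [m, m + w]. Left multiplication by a
   nonnegative matrix keeps the window, and a block of N consecutive factors,
   whose entries all lie in [a, b] with a > 0 by strong connectivity, shrinks
   its width by the factor 1 - a/b while m never drops below a/b. Hence
   P_t(i,j) / P_t(i,o) and P_t(o,j) / P_t(o,o) become relatively equal, i.e.
   P_t is asymptotically the rank one matrix P_t(i,o) P_t(o,j) / P_t(o,o). *)

Definition ratio_window (R : numDomainType) (n : nat) (A : 'M[R]_n) (o j : 'I_n)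
  (m w : R) : Prop :=
  forall k, m * A k o <= A k j <= (m + w) * A k o.

Lemma le_sum_term (R : numDomainType) (n : nat) (F : 'I_n -> R) :
  (forall j, 0 <= F j) -> forall k, F k <= \sum_j F j.
Proof. by move=> F_ge0 k; rewrite (bigD1 k) //= lerDl sumr_ge0. Qed.

Lemma ratio_window_mulmx (R : realFieldType) (n : nat) (Q A : 'M[R]_n) o j m w :
  (forall i k, 0 <= Q i k) -> ratio_window A o j m w ->
  ratio_window (Q *m A) o j m w.
Proof.
move=> Q_ge0 hA i; rewrite !mxE !mulr_sumr.
apply/andP; split; apply: ler_sum => k _; have /andP[lo hi] := hA k;
  by rewrite mulrCA ler_wpM2l.
Qed.

Lemma ratio_window_contract (R : realFieldType) (n : nat) (Q A : 'M[R]_n) o j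
    (a b m w : R) :
  0 < a -> a <= b -> (forall i k, a <= Q i k <= b) -> (forall k, 0 < A k o) ->
  ratio_window A o j m w ->
  exists2 m', m <= m' &
    ratio_window (Q *m A) o j m' ((1 - a / b) * w).
Proof.
move=> a_gt0 a_le_b hQ Ao_gt0 hA.
have b_gt0 : 0 < b := lt_le_trans a_gt0 a_le_b.
set X := \sum_k A k o.
pose z k := A k j - m * A k o.
have z_ge0 : forall k, 0 <= z k <= w * A k o.
  move=> k; have /andP[lo hi] := hA k.
  by rewrite /z subr_ge0 lo /= lerBlDl -mulrDl.
have Z_ge0 : 0 <= \sum_k z k by apply: sumr_ge0 => k _; case/andP: (z_ge0 k).
have X_ge0 : 0 <= X by apply: sumr_ge0 => k _; exact: ltW (Ao_gt0 k).
exists (m + a / (b * X) * \sum_k z k).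
  by rewrite lerDl mulr_ge0 // divr_ge0 ?mulr_ge0 // ltW.
move=> i.
have X_gt0 : 0 < X := lt_le_trans (Ao_gt0 i) (le_sum_term (fun k => ltW (Ao_gt0 k)) i).
set S := \sum_k Q i k * A k o.
have S_le : S <= b * X.
  rewrite /S /X mulr_sumr; apply: ler_sum => k _.
  by apply: ler_wpM2r; [exact: ltW | case/andP: (hQ i k)].
(* row i of Q = the constant a S / (b X), which raises the lower end of the
   window by the same amount for every i, plus a nonnegative rest c *)
pose c k := Q i k - a * S / (b * X).
have c_ge0 : forall k, 0 <= c k.
  move=> k; rewrite /c subr_ge0; case/andP: (hQ i k) => + _; apply: le_trans.
  by rewrite -mulrA ler_piMr ?(ltW a_gt0) // ler_pdivrMr ?mul1r ?mulr_gt0.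
have lowerE : (Q *m A) i j - (m + a / (b * X) * \sum_k z k) * S = \sum_k c k * z k.
  have cE : \sum_k c k * z k = \sum_k Q i k * z k - a * S / (b * X) * \sum_k z k.
    by rewrite mulr_sumr -sumrB; apply: eq_bigr => k _; rewrite /c; ring.
  have zE : \sum_k Q i k * z k = \sum_k Q i k * A k j - m * S.
    by rewrite /S mulr_sumr -sumrB; apply: eq_bigr => k _; rewrite /z; ring.
  by rewrite mxE cE zE; ring.
have cxE : \sum_k c k * A k o = (1 - a / b) * S.
  have -> : \sum_k c k * A k o = S - a * S / (b * X) * X.
    by rewrite /X mulr_sumr -sumrB; apply: eq_bigr => k _; rewrite /c; ring.
  by field; rewrite !gt_eqF.
have cz_le : \sum_k c k * z k <= (1 - a / b) * w * S.
  rewrite -mulrA mulrCA -cxE mulr_sumr; apply: ler_sum => k _.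
  by rewrite mulrCA ler_wpM2l //; case/andP: (z_ge0 k).
have SE : (Q *m A) i o = S by rewrite mxE.
rewrite SE; apply/andP; split.
  by rewrite -subr_ge0 lowerE sumr_ge0 // => k _; rewrite mulr_ge0 //; case/andP: (z_ge0 k).
move: lowerE cz_le; set T := \sum_k c k * z k; lra.
Qed.

Lemma dist1_div_le (R : realFieldType) (r1 r2 m d : R) :
  0 < m -> m <= r1 <= m + d -> m <= r2 <= m + d -> `|1 - r1 / r2| <= d / m.
Proof.
move=> m_gt0 /andP[r1_lo r1_hi] /andP[r2_lo r2_hi].
have r2_gt0 : 0 < r2 := lt_le_trans m_gt0 r2_lo.
have -> : 1 - r1 / r2 = (r2 - r1) / r2 by field; rewrite gt_eqF.
have d_ge0 : 0 <= d by lra.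
rewrite normrM normfV (gtr0_norm r2_gt0) ler_pdivrMr // mulrAC ler_pdivlMr //.
have : `|r2 - r1| <= d by rewrite ler_norml; apply/andP; split; lra.
by move=> h; rewrite (le_trans (ler_wpM2r (ltW m_gt0) h)) // ler_wpM2l.
Qed.

Lemma ratio_window_div (R : realFieldType) (n : nat) (A : 'M[R]_n) o j m w k :
  0 < A k o -> ratio_window A o j m w -> m <= A k j / A k o <= m + w.
Proof.
by move=> Ako_gt0 /(_ k); rewrite ler_pdivlMr // ler_pdivrMr.
Qed.

Lemma rank_col_mul_row (R : fieldType) (n : nat) (u v : 'I_n -> R) i0 j0 :
  u i0 != 0 -> v j0 != 0 -> \rank (\col_i u i *m \row_j v j) = 1%N.
Proof.
move=> u_neq0 v_neq0; apply/eqP; rewrite eqn_leq.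
rewrite (leq_trans (mxrankM_maxl _ _) (rank_leq_col _)) /= lt0n mxrank_eq0.
apply/eqP => /matrixP /(_ i0 j0); rewrite !mxE big_ord1 !mxE => /eqP.
by rewrite mulf_eq0 (negbTE u_neq0) (negbTE v_neq0).
Qed.

Definition rank_one_approx (R : fieldType) (n : nat) (A : 'M[R]_n) (o : 'I_n)
  : 'M[R]_n :=
  \col_i A i o *m \row_j (A o j / A o o).

Lemma rank_one_approxE (R : fieldType) (n : nat) (A : 'M[R]_n) o i j :
  rank_one_approx A o i j = A i o * (A o j / A o o).
Proof. by rewrite !mxE big_ord1 !mxE. Qed.

Lemma rank_one_approx_pos (R : realFieldType) (n : nat) (A : 'M[R]_n) o :
  (forall i j, 0 < A i j) ->
  \rank (rank_one_approx A o) = 1%N /\ forall i j, 0 < rank_one_approx A o i j.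
Proof.
move=> A_gt0; have pos i j : 0 < rank_one_approx A o i j.
  by rewrite rank_one_approxE !mulr_gt0 ?invr_gt0.
split=> //; apply: (@rank_col_mul_row _ _ _ (fun j => A o j / A o o) o o).
  by rewrite gt_eqF.
by rewrite gt_eqF ?divr_gt0.
Qed.

Lemma ratio_window_dist1 (R : realFieldType) (n : nat) (A : 'M[R]_n) o j i (m w : R) :
  0 < m -> 0 < A i o -> 0 < A o o -> ratio_window A o j m w ->
  `|1 - A i j / rank_one_approx A o i j| <= w / m.
Proof.
move=> m_gt0 Aio_gt0 Aoo_gt0 window.
have Aoj_gt0 : 0 < A o j.
  by have /andP[+ _] := window o; apply: lt_le_trans; rewrite mulr_gt0.
rewrite rank_one_approxE.
have -> : A i j / (A i o * (A o j / A o o)) = (A i j / A i o) / (A o j / A o o).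
  by field; rewrite !gt_eqF.
by apply: dist1_div_le; [| exact: ratio_window_div window | exact: ratio_window_div window].
Qed.

Lemma cvg1_of_geometric_bound (R : realType) (f : nat -> R) (q c : R) :
  `|q| < 1 -> (forall n, \forall t \near \oo, `|1 - f t| <= q ^+ n * c) ->
  f @ \oo --> (1 : R).
Proof.
move=> q_lt1 hf; apply/cvgrPdist_le => e e_gt0.
have qc_to0 : (fun n => q ^+ n * c) @ \oo --> 0.
  by rewrite -(mul0r c); apply: cvgMr_tmp; exact: cvg_expr.
have [n qc_le] : exists n, q ^+ n * c <= e.
  have /cvgrPdist_le /(_ e e_gt0) := qc_to0.
  by case/filter_ex => n; rewrite sub0r normrN => /(le_trans (ler_norm _)); exists n.
by apply: filterS (hf n) => t /le_trans; apply.
Qed.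

Lemma in_M_entry (R : realType) (N : nat) (E : rel 'I_N) (eps C1 C2 : R)
    (X : 'M[R]_N) :
  in_M E eps C1 C2 X ->
  exists d : 'rV[R]_N, exists2 A : 'M[R]_N,
    (forall i, C1 <= d 0 i <= C2) /\ in_A E eps A & forall i j, X i j = d 0 i * A i j.
Proof.
case=> D [A [[d [-> hd]] [hA ->]]]; exists d, A => // i j.
by rewrite mul_diag_mx mxE.
Qed.

Section InM.
Variables (R : realType) (N : nat) (E : rel 'I_N) (eps C1 C2 : R) (X : 'M[R]_N).
Hypotheses (C1_gt0 : 0 < C1) (X_in : in_M E eps C1 C2 X).

Lemma in_M_ge0 i j : 0 <= X i j.
Proof.
have [d [A [hd [[A_ge0 _] _]] ->]] := in_M_entry X_in.
by rewrite mulr_ge0 // (le_trans (ltW C1_gt0)) //; case/andP: (hd i).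
Qed.

Lemma in_M_edge i j : 0 <= eps -> E j i -> C1 * eps <= X i j.
Proof.
have [d [A [hd [_ [hE _]]] ->]] := in_M_entry X_in.
move=> eps_ge0 /hE[eps_le _]; have /andP[C1_le _] := hd i.
by apply: ler_pM => //; exact: ltW.
Qed.

Lemma in_M_row_sum_le i : \sum_j X i j <= C2.
Proof.
have [d [A [hd [[_ A_sum1] _]] X_E]] := in_M_entry X_in.
under eq_bigr do rewrite X_E.
by rewrite -mulr_sumr A_sum1 mulr1; case/andP: (hd i).
Qed.

End InM.

Fixpoint block_prod (R : pzRingType) (n : nat) (M : nat -> 'M[R]_n) (s k : nat)
  : 'M[R]_n :=
  if k is k'.+1 then M (s + k')%N *m block_prod M s k' else 1%:M.

Lemma block_prodD (R : pzRingType) (n : nat) (M : nat -> 'M[R]_n) r s k :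
  block_prod M r (s + k) = block_prod M (r + s) k *m block_prod M r s.
Proof.
elim: k => [|k IH]; first by rewrite addn0 /= mul1mx.
by rewrite addnS /= IH addnA mulmxA.
Qed.

Lemma partial_prodE (R : realType) (n : nat) (M : nat -> 'M[R]_n) t :
  partial_prod M t = block_prod M 0 t.+1.
Proof. by elim: t => [|t /= ->]; rewrite /= ?mulmx1. Qed.

Section BlockBounds.
Variables (R : realType) (N : nat) (E : rel 'I_N) (eps C1 C2 : R).
Variable M : nat -> 'M[R]_N.
Hypotheses (C1_gt0 : 0 < C1) (C2_gt0 : 0 < C2) (eps_gt0 : 0 < eps).
Hypothesis M_in : forall t, in_M E eps C1 C2 (M t).

Lemma block_prod_ge0 s k i l : 0 <= block_prod M s k i l.
Proof.
elim: k i l => [|k IH] i l /=; first by rewrite mxE ler0n.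
by rewrite mxE sumr_ge0 // => j _; rewrite mulr_ge0 // (in_M_ge0 C1_gt0 (M_in _)).
Qed.

Lemma block_prod_row_sum_le s k i : \sum_l block_prod M s k i l <= C2 ^+ k.
Proof.
elim: k i => [|k IH] i /=.
  rewrite (bigD1 i) //= mxE eqxx big1 ?addr0 // => l l_neq_i.
  by rewrite mxE eq_sym (negbTE l_neq_i).
under eq_bigr do rewrite mxE.
rewrite exchange_big /=; under eq_bigr do rewrite -mulr_sumr.
apply: (@le_trans _ _ (\sum_j M (s + k)%N i j * C2 ^+ k)).
  by apply: ler_sum => j _; rewrite ler_wpM2l // (in_M_ge0 C1_gt0 (M_in _)).
rewrite -mulr_suml exprS ler_wpM2r ?exprn_ge0 //; first exact: ltW.
exact: in_M_row_sum_le (M_in _) i.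
Qed.

Lemma block_prod_le s k i l : block_prod M s k i l <= C2 ^+ k.
Proof.
apply: le_trans (block_prod_row_sum_le s k i).
exact: le_sum_term (block_prod_ge0 s k i) l.
Qed.

(* a walk from l of length <= k, padded with self loops, is a k-step path
   through entries >= C1 eps of the factors *)
Lemma block_prod_walk_ge s k l p :
  has_self_loops E -> path E l p -> (size p <= k)%N ->
  (C1 * eps) ^+ k <= block_prod M s k (last l p) l.
Proof.
move=> loops; elim: k p => [|k IH] p walk size_p.
  by case: p walk size_p => // _ _; rewrite /= mxE eqxx expr0.
have step u v : E u v -> (C1 * eps) ^+ k <= block_prod M s k u l ->
    (C1 * eps) ^+ k.+1 <= block_prod M s k.+1 v l.
  move=> uv u_ge /=; rewrite mxE exprS.
  apply: le_trans (le_sum_term (fun j => mulr_ge0 (in_M_ge0 C1_gt0 (M_in _) v j)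
    (block_prod_ge0 s k j l)) u).
  have c_ge0 : 0 <= C1 * eps by rewrite mulr_ge0 ?ltW.
  apply: ler_pM => //; first exact: exprn_ge0.
  exact: in_M_edge C1_gt0 (M_in _) _ _ (ltW eps_gt0) uv.
case/lastP: p walk size_p => [|p v] walk size_p.
  exact: step (loops l) (IH [::] walk isT).
move: walk size_p; rewrite rcons_path size_rcons => /andP[walk' ev] size_p.
by rewrite last_rcons; apply: step ev (IH p walk' size_p).
Qed.

Lemma block_prod_ge s k i l :
  strongly_connected E -> has_self_loops E -> (N <= k)%N ->
  (C1 * eps) ^+ k <= block_prod M s k i l.
Proof.
move=> connected loops N_le_k.
have [<-|l_neq_i] := eqVneq l i; first exact: (block_prod_walk_ge s (p := [::])).
have [/connectP[p walk ->] _] := connected l i l_neq_i.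
have [p' walk' uniq_p' _] := shortenP walk.
apply: block_prod_walk_ge => //.
have := max_card (mem (l :: p')); rewrite card_ord (card_uniqP uniq_p') => size_lt.
exact: leq_trans (ltnW size_lt) N_le_k.
Qed.

End BlockBounds.

Section ColumnRatios.
Variables (R : realType) (N : nat) (E : rel 'I_N) (eps C1 C2 : R).
Variable M : nat -> 'M[R]_N.
Hypotheses (C1_gt0 : 0 < C1) (C2_gt0 : 0 < C2) (eps_gt0 : 0 < eps).
Hypothesis M_in : forall t, in_M E eps C1 C2 (M t).
Hypotheses (connected : strongly_connected E) (loops : has_self_loops E).
Variables o j : 'I_N.

Local Notation P t := (block_prod M 0 t).
Local Notation a := ((C1 * eps) ^+ N).
Local Notation b := (C2 ^+ N).

Let a_gt0 : 0 < a. Proof. by rewrite exprn_gt0 ?mulr_gt0. Qed.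

Let block_in_bounds s i l : a <= block_prod M s N i l <= b.
Proof.
by rewrite (block_prod_ge C1_gt0 eps_gt0 M_in) ?(block_prod_le C1_gt0 C2_gt0 M_in).
Qed.

Let b_gt0 : 0 < b.
Proof. by rewrite exprn_gt0. Qed.

Let a_le_b : a <= b.
Proof. by case/andP: (block_in_bounds 0 o o); apply: le_trans. Qed.

Lemma block_prod_gt0 t i l : (N <= t)%N -> 0 < P t i l.
Proof.
move=> N_le_t; apply: lt_le_trans (block_prod_ge C1_gt0 eps_gt0 M_in _ _ _ _ _ N_le_t) => //.
by rewrite exprn_gt0 ?mulr_gt0.
Qed.

Lemma window_extend t d m w :
  ratio_window (P t) o j m w ->
  ratio_window (P (t + d)) o j m w.
Proof.
move=> window_t; elim: d => [|d IH]; first by rewrite addn0.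
by rewrite addnS; apply: ratio_window_mulmx (in_M_ge0 C1_gt0 (M_in _)) IH.
Qed.

Lemma window_init : ratio_window (P N) o j (a / b) (b / a - a / b).
Proof.
move=> k; rewrite addrC subrK.
have /andP[a_le_o o_le_b] := block_in_bounds 0 k o.
have /andP[a_le_j j_le_b] := block_in_bounds 0 k j.
rewrite mulrAC ler_pdivrMr // mulrAC ler_pdivlMr //.
have P_ge0 := block_prod_ge0 C1_gt0 M_in 0 N k.
by apply/andP; split; apply: ler_pM; rewrite ?P_ge0 ?(ltW a_gt0).
Qed.

Lemma window_geometric n t : (n.+1 * N <= t)%N ->
  exists2 m, a / b <= m &
    ratio_window (P t) o j m ((1 - a / b) ^+ n * (b / a - a / b)).
Proof.
elim: n t => [|n IH] t.
  rewrite mul1n => N_le_t; exists (a / b) => //.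
  by rewrite expr0 mul1r -(subnKC N_le_t); apply: window_extend window_init.
rewrite mulSn => t_ge.
have N_le_t : (N <= t)%N := leq_trans (leq_addr _ _) t_ge.
have tN_ge : (n.+1 * N <= t - N)%N by rewrite leq_subRL.
have N_le_tN : (N <= t - N)%N := leq_trans (leq_pmull N (ltn0Sn n)) tN_ge.
have [m lo_m window_m] := IH _ tN_ge.
rewrite -(subnK N_le_t) block_prodD add0n.
have [m' m_le window_m'] := ratio_window_contract a_gt0 a_le_b
  (block_in_bounds (t - N)) (fun k => block_prod_gt0 k o N_le_tN) window_m.
by exists m'; [exact: le_trans lo_m m_le | rewrite exprS -mulrA].
Qed.

Lemma block_prod_rank_one_cvg i :
  (fun t => P t i j / rank_one_approx (P t) o i j) @ \oo --> (1 : R).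
Proof.
have ab_gt0 : 0 < a / b by rewrite divr_gt0.
have ab_le1 : a / b <= 1 by rewrite ler_pdivrMr ?mul1r.
have width_ge0 : 0 <= b / a - a / b.
  by rewrite subr_ge0 (le_trans ab_le1) // ler_pdivlMr ?mul1r.
apply: (@cvg1_of_geometric_bound _ _ (1 - a / b) ((b / a - a / b) / (a / b))).
  by rewrite ger0_norm ?subr_ge0 // ltrBlDr ltrDl.
move=> n; exists (n.+1 * N)%N => // t /= t_ge.
have N_le_t : (N <= t)%N := leq_trans (leq_pmull N (ltn0Sn n)) t_ge.
have [m lo_m window] := window_geometric t_ge.
have m_gt0 := lt_le_trans ab_gt0 lo_m.
apply: le_trans (ratio_window_dist1 m_gt0 (block_prod_gt0 i o N_le_t)
  (block_prod_gt0 o o N_le_t) window) _.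
rewrite -mulrA ler_wpM2l ?exprn_ge0 ?subr_ge0 // ler_wpM2l // lef_pV2 ?posrE //.
Qed.

End ColumnRatios.

Unset Implicit Arguments. Set Strict Implicit.

Theorem mainTheorem9 (R : realType) (N : nat) (E : rel 'I_N)
  (eps C1 C2 : R) (M : nat -> 'M[R]_N) :
  (0 < N)%N -> strongly_connected E -> has_self_loops E ->
  0 < eps -> 0 < C1 -> 0 < C2 ->
  (forall t, in_M E eps C1 C2 (M t)) ->
  exists S : nat -> 'M[R]_N,
    (forall t, \rank (S t) = 1%N /\ forall i j, 0 < S t i j) /\
    (forall i j : 'I_N,
       (fun t : nat => partial_prod M t i j / S t i j) @ \oo --> (1 : R)).
Proof.
move=> N_gt0 connected loops eps_gt0 C1_gt0 C2_gt0 M_in.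
pose o := Ordinal N_gt0.
(* with fewer than N factors the product may have zero entries; any positive
   matrix serves as S t there *)
pose B t := if (N <= t.+1)%N then partial_prod M t else const_mx 1.
have B_gt0 t i j : 0 < B t i j.
  rewrite /B; case: ifP => [N_le|_]; last by rewrite mxE.
  by rewrite partial_prodE (block_prod_gt0 C1_gt0 eps_gt0 M_in connected loops).
exists (fun t => rank_one_approx (B t) o); split.
  by move=> t; apply: rank_one_approx_pos.
move=> i j; have := block_prod_rank_one_cvg C1_gt0 C2_gt0 eps_gt0 M_in connected loops o j i.
rewrite -cvg_shiftS; apply: cvg_trans; apply: near_eq_cvg.
exists N => // t /= N_le_t.
by rewrite /B (leqW N_le_t) partial_prodE.
Qed.
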